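(* Let $\mathfrak{B}$ be a finite cyclic group, of order at least $3$, of invertible diagonal $2\times2$ complex matrices, containing three pairwise linearly independent matrices. Let $n\ge3$ and let $F$ be a Boolean function of arity $2n$ such that every function of arity less than $2n$ realizable by a gadget of $\#(\{F\}\cup\mathfrak{B})$ lies in $\lambda\langle\mathfrak{B}\rangle$. Then either $F$ is the zero function, or there exist two distinct variables $x,y$ of $F$ such that both $F^{00}_{xy}$ and $F^{11}_{xy}$ are nonzero functions.
   Context: Matrices in $\mathfrak{B}$ are binary functions $M(u,v)=M_{uv}$. $\#\mathcal{G}$: input a finite multigraph whose vertices carry functions from $\mathcal{G}$ of arity equal to the degree (edges act as binary equality); output the sum over $\{0,1\}$-edge assignments of the product of vertex functions. Gadgets are such networks with dangling edges; realizable functions are their functions. $\langle\mathfrak{B}\rangle$ is the set of functions $x\mapsto\prod_{j=1}^m M_j(x_{\pi(2j-1)},x_{\pi(2j)})$ with $\pi$ a permutation of the $2m$ variables and $M_j\in\mathfrak{B}$; $\lambda\langle\mathfrak{B}\rangle=\{\lambda f:\lambda\in\mathbb{C},f\in\langle\mathfrak{B}\rangle\}$. For variables $x,y$ of $F$ and $a,b\in\{0,1\}$, $F^{ab}_{xy}$ is the arity-$(2n-2)$ function obtained from $F$ by fixing $x=a$, $y=b$. *)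

From HB Require Import structures.
From mathcomp Require Import all_boot all_order all_algebra.
Set Implicit Arguments. Unset Strict Implicit. Unset Printing Implicit Defensive.
Import Order.TTheory GRing.Theory Num.Theory.
Local Open Scope ring_scope.

Section Defs.
Variable C : numClosedFieldType.

Definition bfunT (I : finType) := {ffun {ffun I -> bool} -> C}.
Definition bfun (k : nat) := bfunT 'I_k.

Definition b2o (b : bool) : 'I_2 := if b then ord_max else ord0.

Definition matfun (M : 'M[C]_2) : bfun 2 :=
  [ffun x : {ffun 'I_2 -> bool} => M (b2o (x ord0)) (b2o (x ord_max))].

(* f \in lambda<B> : f(x) = lam * prod_j M_j(x_{a j}, x_{b j}) where the
   pairs (a j, b j), j < m, list all k variables exactly once
   (i.e. j |-> (pi(2j-1), pi(2j)) for a permutation pi), and M_j \in B. *)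
Definition inLB (B : 'M[C]_2 -> Prop) (k : nat) (f : bfun k) : Prop :=
  exists (lam : C) (m : nat) (a b : 'I_m -> 'I_k) (Ms : 'I_m -> 'M[C]_2),
    (forall j, B (Ms j)) /\
    bijective (fun s : 'I_m + 'I_m =>
                 match s with inl j => a j | inr j => b j end) /\
    forall x : {ffun 'I_k -> bool},
      f x = lam * \prod_(j < m) Ms j (b2o (x (a j))) (b2o (x (b j))).

(* Gadgets of #({F} \cup B), with F of arity 2n.  A vertex is labelled
   None (carrying F, degree 2n) or Some M (carrying M \in B, degree 2). *)
Definition arity (n : nat) (o : option 'M[C]_2) : nat :=
  if o is Some _ then 2 else (2 * n)%N.

Definition vval (n : nat) (F : bfun (2 * n)) (o : option 'M[C]_2) :
  {ffun 'I_(arity n o) -> bool} -> C :=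
  match o as o0 return {ffun 'I_(arity n o0) -> bool} -> C with
  | None => fun y => F y
  | Some M => fun y => matfun M y
  end.

(* f (arity k) is realizable by a gadget: nv vertices with labels lab,
   ne internal edges and k (ordered) dangling edges; the wiring w sends each
   incidence slot (v, i), i < deg v, to the edge occupying it; every internal
   edge occupies exactly 2 slots (loops/multi-edges allowed) and every
   dangling edge exactly one. *)
Definition realizable (B : 'M[C]_2 -> Prop) (n : nat) (F : bfun (2 * n))
  (k : nat) (f : bfun k) : Prop :=
  exists (nv ne : nat) (lab : 'I_nv -> option 'M[C]_2)
    (w : {v : 'I_nv & 'I_(arity n (lab v))} -> 'I_ne + 'I_k),
    (forall v M, lab v = Some M -> B M) /\
    (forall e : 'I_ne, #|[pred s | w s == inl e]| = 2%N) /\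
    (forall d : 'I_k, #|[pred s | w s == inr d]| = 1%N) /\
    forall x : {ffun 'I_k -> bool},
      f x = \sum_(sg : {ffun 'I_ne -> bool})
              \prod_(v : 'I_nv)
                 @vval n F (lab v)
                   [ffun i : 'I_(arity n (lab v)) =>
                      match w (@Tagged _ v (fun v => 'I_(arity n (lab v))) i) with
                      | inl e => sg e
                      | inr d => x d
                      end].

(* F^{ab}_{xy}: fix x = a, y = b; the remaining variables are those i with
   i != x and i != y (there are k - 2 of them when x != y). *)
Definition pin (k : nat) (F : bfun k) (x y : 'I_k) (a b : bool) :
  bfunT {i : 'I_k | (i != x) && (i != y)} :=
  [ffun z : {ffun {i : 'I_k | (i != x) && (i != y)} -> bool} => F [ffun i : 'I_k =>
                  match insub i : option {i : 'I_k | (i != x) && (i != y)} with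
                  | Some j => z j
                  | None => if i == x then a else b
                  end]].

Definition diag_cyclic_group (B : 'M[C]_2 -> Prop) (m : nat) : Prop :=
  exists g : 'M[C]_2,
    is_diag_mx g /\ g \in unitmx /\
    (0 < m)%N /\ g ^+ m = 1 /\ (forall j, (0 < j < m)%N -> g ^+ j != 1) /\
    (forall M, B M <-> exists j, M = g ^+ j).

Definition lin_indep2 (M1 M2 : 'M[C]_2) : Prop :=
  forall a b : C, a *: M1 + b *: M2 = 0 -> a = 0 /\ b = 0.

End Defs.

From HB Require Import structures.
From mathcomp Require Import all_boot all_order all_algebra zify.
Set Implicit Arguments. Unset Strict Implicit. Unset Printing Implicit Defensive.
Import Order.TTheory GRing.Theory Num.Theory.
Local Open Scope ring_scope.

(* If F s <> 0, two of the variables 0, 1, 2 agree under s, say s x = s y.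
   Unless F^{00}_{xy} and F^{11}_{xy} are both nonzero, some F^{cc}_{xy}
   vanishes; joining x and y by a loop then gives a gadget of arity 2n - 2
   whose function is z |-> F(z, x = y = ~~ c), which is nonzero at s.  It lies
   in lambda<B> with lambda <> 0, and since the matrices of B are invertible
   and diagonal it is nonzero on both constant inputs; so F^{00}_{uv} and
   F^{11}_{uv} are nonzero for any two further variables u, v. *)

Lemma exp_diag_mx (R : pzRingType) (k : nat) (d : 'rV[R]_k) (j : nat) :
  diag_mx d ^+ j = diag_mx (map_mx (fun a => a ^+ j) d).
Proof.
elim: j => [|j IHj]; apply/matrixP => a b.
  by rewrite expr0 !mxE; case: eqP.
rewrite exprS IHj -mulmxE mul_diag_mx !mxE.
by case: eqP => _; rewrite ?mulr0n ?mulr1n ?mulr0 // exprS.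
Qed.

Lemma diag_unitmx_exp_entry_neq0 (R : fieldType) (k : nat) (g : 'M[R]_k) (j : nat) :
  is_diag_mx g -> g \in unitmx -> forall i, (g ^+ j) i i != 0.
Proof.
move=> /diag_mxP[d ->]; rewrite unitmxE det_diag unitfE => /prodf_neq0 d_neq0 i.
by rewrite exp_diag_mx !mxE eqxx mulr1n expf_neq0 ?d_neq0.
Qed.

Lemma diag_cyclic_group_diag_neq0 (C : numClosedFieldType) (B : 'M[C]_2 -> Prop) (m : nat) :
  diag_cyclic_group B m -> forall M, B M -> forall i, M i i != 0.
Proof.
move=> [g [g_diag [g_unit [_ [_ [_ B_pow]]]]]] M /B_pow[j ->].
exact: diag_unitmx_exp_entry_neq0.
Qed.

Lemma inLB_const_neq0 (C : numClosedFieldType) (B : 'M[C]_2 -> Prop) (k : nat)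
    (f : bfun C k) (z : {ffun 'I_k -> bool}) :
  (forall M, B M -> forall i, M i i != 0) -> inLB B f -> f z != 0 ->
  forall d, f [ffun _ => d] != 0.
Proof.
move=> B_diag [lam [m [a [b [Ms [B_Ms [_ fE]]]]]]] fz_neq0 d.
have lam_neq0 : lam != 0 by apply: contraNneq fz_neq0; rewrite fE => ->; rewrite mul0r.
rewrite fE mulf_neq0 //; apply/prodf_neq0 => j _; rewrite !ffunE.
exact: B_diag.
Qed.

Lemma pinE (C : numClosedFieldType) (k : nat) (F : bfun C k) (x y : 'I_k) (a b : bool)
    (Q : {ffun 'I_k -> bool}) :
  Q x = a -> Q y = b -> pin F x y a b [ffun j => Q (val j)] = F Q.
Proof.
move=> Qx Qy; rewrite ffunE; congr (F _); apply/ffunP => i; rewrite ffunE.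
case: insubP => [j _ <-|]; first by rewrite ffunE.
by rewrite negb_and !negbK => /orP[]/eqP->; rewrite ?eqxx //; case: eqP => [->|].
Qed.

Section SelfLoop.
Variables (C : numClosedFieldType) (n : nat) (F : bfun C (2 * n)) (x y : 'I_(2 * n)).

Let T := {i : 'I_(2 * n) | (i != x) && (i != y)}.

Definition extend (z : {ffun 'I_#|{: T}| -> bool}) (c : bool) : {ffun 'I_(2 * n) -> bool} :=
  [ffun i => if insub i is Some j then z (enum_rank j) else c].

Definition self_loop : bfun C #|{: T}| := [ffun z => F (extend z true) + F (extend z false)].

Lemma extend_x z c : extend z c x = c.
Proof. by rewrite ffunE insubN // eqxx. Qed.

Lemma extend_y z c : extend z c y = c.
Proof. by rewrite ffunE insubN // eqxx andbF. Qed.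

Lemma extend_restrict (Q : {ffun 'I_(2 * n) -> bool}) (c : bool) :
  Q x = c -> Q y = c -> extend [ffun d => Q (val (enum_val d))] c = Q.
Proof.
move=> Qx Qy; apply/ffunP => i; rewrite ffunE.
case: insubP => [j _ <-|]; first by rewrite ffunE enum_rankK.
by rewrite negb_and !negbK => /orP[]/eqP->.
Qed.

Lemma extend_const (d c : bool) (q : 'I_(2 * n)) : q != x -> q != y -> extend [ffun=> d] c q = d.
Proof.
by move=> qx qy; rewrite ffunE insubT ?qx ?qy // => ?; rewrite ffunE.
Qed.

Lemma pin_extend (c : bool) (z : {ffun 'I_#|{: T}| -> bool}) :
  pin F x y c c [ffun j => z (enum_rank j)] = F (extend z c).
Proof.
rewrite -(pinE F (extend_x z c) (extend_y z c)); congr (pin _ _ _ _ _ _); apply/esym.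
by apply/ffunP => j; rewrite !ffunE valK.
Qed.

Lemma self_loop_pin_neq0 (B : 'M[C]_2 -> Prop) (c : bool) (s : {ffun 'I_(2 * n) -> bool})
    (u v : 'I_(2 * n)) :
  (forall M, B M -> forall i, M i i != 0) -> inLB B self_loop ->
  pin F x y c c = 0 -> F s != 0 -> s x = s y ->
  u != x -> u != y -> v != x -> v != y -> forall d, pin F u v d d != 0.
Proof.
move=> B_diag loop_inLB pin0 Fs_neq0 sxy ux uy vx vy d.
have F_extend0 z : F (extend z c) = 0 by rewrite -pin_extend pin0 ffunE.
have loopE z : self_loop z = F (extend z (~~ c)).
  by rewrite ffunE; case: c pin0 F_extend0 => _ ->; rewrite ?addr0 ?add0r.
have sx : s x = ~~ c.
  case: (s x =P c) => [sxc | /eqP]; last by case: (s x); case: (c).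
  by move: Fs_neq0; rewrite -(extend_restrict sxc (etrans (esym sxy) sxc)) F_extend0 eqxx.
have loop_neq0 : self_loop [ffun d => s (val (enum_val d))] != 0.
  by rewrite loopE -sx extend_restrict // -sxy.
have := inLB_const_neq0 B_diag loop_inLB loop_neq0 d.
rewrite loopE -(pinE F (extend_const _ _ ux uy) (extend_const _ _ vx vy)).
by apply: contraNneq => ->; rewrite ffunE.
Qed.

Lemma card_self_loop_lt : (#|{: T}| < 2 * n)%N.
Proof.
rewrite card_sig -[X in (_ < X)%N](card_ord (2 * n)).
apply/proper_card/properP; split; first exact/subsetP.
by exists x; rewrite ?inE ?eqxx.
Qed.

Section Gadget.
Hypothesis xy : x != y.

Let lab : 'I_1 -> option 'M[C]_2 := fun=> None.
Let slot := {v : 'I_1 & 'I_(arity n (lab v))}.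
Let slot_of (i : 'I_(2 * n)) : slot := @Tagged _ ord0 (fun v => 'I_(arity n (lab v))) i.

Definition self_loop_wiring (s : slot) : 'I_1 + 'I_#|{: T}| :=
  if insub (tagged s : 'I_(2 * n)) is Some j then inr (enum_rank j) else inl ord0.

Lemma card_slot (P : pred ('I_1 + 'I_#|{: T}|)) :
  #|[pred s | P (self_loop_wiring s)]| = #|[pred i | P (self_loop_wiring (slot_of i))]|.
Proof.
rewrite -!sum1_card (reindex slot_of) //.
exists (fun s => tagged s : 'I_(2 * n)) => // [[v i]] _.
by rewrite /slot_of (ord1 v).
Qed.

Lemma self_loop_realizable (B : 'M[C]_2 -> Prop) : realizable B F self_loop.
Proof.
exists 1%N, 1%N, lab, self_loop_wiring; split=> //; split; [|split].
- move=> e; rewrite (card_slot (pred1 (inl e))).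
  transitivity #|pred2 x y|; last by rewrite card2 xy.
  apply: eq_card => i.
  rewrite !inE /self_loop_wiring /= (ord1 e).
  case: insubP => [j /andP[/negPf-> /negPf->] _ //|].
  by rewrite negb_and !negbK.
- move=> d; rewrite (card_slot (pred1 (inr d))).
  transitivity #|pred1 (val (enum_val d))|; last exact: card1.
  apply: eq_card => i.
  rewrite !inE /self_loop_wiring /=.
  case: insubP => [j _ <-|i_xy].
    by apply/eqP/eqP => [[<-]|/val_inj->]; rewrite ?enum_rankK ?enum_valK.
  by apply/esym/negbTE; apply: contra i_xy => /eqP->; exact: (valP (enum_val d)).
- move=> z; rewrite ffunE.
  rewrite (reindex (fun b : bool => [ffun=> b])); last first.
    exists (fun sg : {ffun 'I_1 -> bool} => sg ord0) => [b _|sg _]; first by rewrite ffunE.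
    by apply/ffunP => i; rewrite ffunE (ord1 i).
  rewrite big_bool /= !big_ord1 /=.
  by congr (F _ + F _); apply/ffunP => i; rewrite !ffunE /self_loop_wiring /=;
    case: insub => [j|] //; rewrite ffunE.
Qed.

Lemma exists_pin_diag_pair (B : 'M[C]_2 -> Prop) (s : {ffun 'I_(2 * n) -> bool})
    (u v : 'I_(2 * n)) :
  (forall M, B M -> forall i, M i i != 0) -> inLB B self_loop ->
  F s != 0 -> s x = s y -> u != v -> u != x -> u != y -> v != x -> v != y ->
  exists x y : 'I_(2 * n), x != y /\ pin F x y false false <> 0 /\ pin F x y true true <> 0.
Proof.
move=> B_diag loop_inLB Fs_neq0 sxy uv ux uy vx vy.
have [/andP[/eqP pin00 /eqP pin11] | ] :=
  boolP [&& pin F x y false false != 0 & pin F x y true true != 0]; first by exists x, y.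
rewrite negb_and !negbK => /orP[] /eqP pin0; exists u, v; split=> //; split; apply/eqP;
  exact: self_loop_pin_neq0 B_diag loop_inLB pin0 Fs_neq0 sxy ux uy vx vy _.
Qed.

End Gadget.
End SelfLoop.

Theorem mainTheorem13 (C : numClosedFieldType) (B : 'M[C]_2 -> Prop)
  (n : nat) (F : bfun C (2 * n)) :
  (exists m : nat, (3 <= m)%N /\ diag_cyclic_group B m) ->
  (exists M1 M2 M3 : 'M[C]_2, [/\ B M1, B M2 & B M3] /\
     [/\ lin_indep2 M1 M2, lin_indep2 M1 M3 & lin_indep2 M2 M3]) ->
  (3 <= n)%N ->
  (forall (k : nat) (f : bfun C k), (k < 2 * n)%N ->
     realizable B F f -> inLB B f) ->
  F = 0 \/
  exists x y : 'I_(2 * n), x != y /\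
    pin F x y false false <> 0 /\ pin F x y true true <> 0.
Proof.
move=> [m [_ B_cyclic]] _ n_ge3 B_closed.
have [->|F_neq0] := eqVneq F 0; [by left | right].
have [s Fs_neq0] : exists s, F s != 0.
  apply/existsP; apply: contraNT F_neq0 => /existsPn F0.
  by apply/eqP/ffunP => s; rewrite ffunE; apply/eqP/negbNE/F0.
have lt_2n i : (i < 5)%N -> (i < 2 * n)%N by lia.
pose i0 := Ordinal (lt_2n 0%N isT); pose i1 := Ordinal (lt_2n 1%N isT).
pose i2 := Ordinal (lt_2n 2%N isT); pose i3 := Ordinal (lt_2n 3%N isT).
pose i4 := Ordinal (lt_2n 4%N isT).
have loop_inLB (x y : 'I_(2 * n)) (xy : x != y) : inLB B (self_loop F x y) :=
  B_closed _ _ (card_self_loop_lt x y) (self_loop_realizable F xy B).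
have : [|| s i0 == s i1, s i0 == s i2 | s i1 == s i2] by case: (s i0) (s i1) (s i2) => [] [] [].
have B_diag := diag_cyclic_group_diag_neq0 B_cyclic.
by case/or3P => /eqP sxy;
  apply: (exists_pin_diag_pair _ B_diag (loop_inLB _ _ _) Fs_neq0 sxy (_ : i3 != i4)).
Qed.
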